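(* Let $m\ge2$ be an integer, $t\ge0$, $\lambda>0$, $s=\frac{t}{2\lambda}$, and consider searching on $m$ rays with turn cost $t$ and lower bound $\lambda$. (i) If $s\le\frac{1}{(\frac{m}{m-1})^{m-1}-1}$, the cyclic strategy with distances $$x_i=\left(\left(\frac{1}{m-1}\Big(1-\Big(\big(\tfrac{m}{m-1}\big)^{m-1}-1\Big)s\Big)\,i+(1+s)\right)\Big(\frac{m}{m-1}\Big)^i-s\right)\lambda$$ is optimal and has competitive ratio $1+2\frac{m^m}{(m-1)^{m-1}}$. (ii) If $s\ge\frac{1}{(\frac{m}{m-1})^{m-1}-1}$, the cyclic strategy with distances $$x_i=\Big((1+s)\big(1+s^{-1}\big)^{\frac{i}{m-1}}-s\Big)\lambda$$ has competitive ratio $$\frac{\big(1+s^{-1}\big)^{-\frac{1}{m-1}}-\big(3+2s^{-1}\big)}{\big(1+s^{-1}\big)^{-\frac{1}{m-1}}-1}.$$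
   Context: Searching on $m$ rays with turn cost. Fix $\lambda>0$, $t\ge0$. A search strategy is a sequence $(x_i,r_i)_{i\ge1}$ with $x_i>0$, $r_i\in\{1,\dots,m\}$ (the $m$ rays emanating from the origin), such that $\sup\{x_i:r_i=r\}=\infty$ for every ray $r$. At step $i$ the searcher walks distance $x_i$ from the origin along ray $r_i$ and, if the target is not found, walks back to the origin, paying an extra turn cost $t$; so each unsuccessful step costs $2x_i+t$. The target lies on one ray at unknown distance $D\ge\lambda$ and is found at the first step $j$ with $r_j$ equal to its ray and $x_j\ge D$; the total cost is then $\sum_{i=1}^{j-1}(2x_i+t)+D$. The competitive ratio is the supremum over all target positions of total cost divided by $D$; a strategy is optimal if its competitive ratio is minimal among all strategies. A cyclic strategy with distances $x_i$ visits the rays in round-robin order, $r_i\equiv i \pmod m$; for increasing distances its competitive ratio equals $\max\Big\{\frac{\sum_{i=1}^{m-1}(2x_i+t)+\lambda}{\lambda},\ \sup_{n\ge1}\frac{\sum_{i=1}^{n+m-1}(2x_i+t)+x_n}{x_n}\Big\}$. *)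

From Stdlib Require Import Reals Lra Lia.
Open Scope R_scope.

(* A search strategy on m rays: step i (i >= 1) goes distance x i along ray r i.
   Values at index 0 are irrelevant (steps are numbered from 1, as in the paper). *)
Definition is_strategy (m : nat) (x : nat -> R) (r : nat -> nat) : Prop :=
  (forall i : nat, (1 <= i)%nat -> 0 < x i /\ (1 <= r i <= m)%nat) /\
  (forall ray : nat, (1 <= ray <= m)%nat ->
     forall B : R, exists i : nat, (1 <= i)%nat /\ r i = ray /\ B < x i).

Fixpoint step_costs (x : nat -> R) (t : R) (n : nat) : R :=
  match n with
  | O => 0
  | S k => step_costs x t k + (2 * x (S k) + t)
  end.

Definition search_cost (x : nat -> R) (r : nat -> nat) (t : R)
    (ray : nat) (D : R) (c : R) : Prop :=
  exists j : nat, (1 <= j)%nat /\ r j = ray /\ D <= x j /\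
    (forall i : nat, (1 <= i)%nat -> (i < j)%nat -> ~ (r i = ray /\ D <= x i)) /\
    c = step_costs x t (j - 1) + D.

Definition ratios (m : nat) (lam t : R) (x : nat -> R) (r : nat -> nat) (q : R) : Prop :=
  exists (ray : nat) (D c : R), (1 <= ray <= m)%nat /\ lam <= D /\
    search_cost x r t ray D c /\ q = c / D.

Definition has_competitive_ratio (m : nat) (lam t : R)
    (x : nat -> R) (r : nat -> nat) (C : R) : Prop :=
  is_lub (ratios m lam t x r) C.

(* Optimal: competitive ratio C is minimal among all strategies
   (strategies with unbounded ratio set have competitive ratio +infinity). *)
Definition is_optimal (m : nat) (lam t : R) (x : nat -> R) (r : nat -> nat) : Prop :=
  exists C : R, has_competitive_ratio m lam t x r C /\
    forall (x' : nat -> R) (r' : nat -> nat) (C' : R),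
      is_strategy m x' r' -> has_competitive_ratio m lam t x' r' C' -> C <= C'.

Definition cyclic_rays (m : nat) (i : nat) : nat :=
  if Nat.eqb (Nat.modulo i m) 0 then m else Nat.modulo i m.

From Stdlib Require Import Reals Lra Lia List ClassicalEpsilon Classical FunctionalExtensionality.
Open Scope R_scope.

(* Both cyclic strategies have the form [x_i = ((A i + B) q^i - s) lam]; the turn cost
   [t = 2 s lam] cancels the shift, and the closed form of the remaining sum gives the
   identity [sum_(i <= n+m-1) (2 x_i + t) = (C - 1) x_n] for all n. Hence every ratio is at
   most C, with equality for a target at distance lam on the last ray of the first round.

   For optimality, let [w_1 <= w_2 <= ...] be the depths reached for the first time on the
   rays by an arbitrary strategy with ratio C', merged in sorted order. A target just beyond
   the current depth of the ray whose next record comes last gives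
   [2 (w_1 + ... + w_(k+m-1)) <= (C' - 1) w_k]. For the partial sums [S_k] this is
   [S_(k+m) + K S_k <= K S_(k+1)] with [K = (C' - 1) / 2]; by AM-GM
   [S_(k+m) S_k^(m-1) m^m / (m-1)^(m-1) <= K S_(k+1)^m], and a logarithmic potential shows
   that this forces [K >= m^m / (m-1)^(m-1)]. *)

Lemma bernoulli_ineq (n : nat) (h : R) : -1 <= h -> 1 + INR n * h <= (1 + h) ^ n.
Proof.
  intro Hh. induction n as [|n IH]; cbn [pow]; [simpl; lra|].
  rewrite S_INR.
  assert (0 <= INR n * (h * h)) by (apply Rmult_le_pos; [apply pos_INR | nra]).
  nra.
Qed.

Lemma amgm_pow (p : nat) (a b : R) : 0 <= a -> 0 < b ->
  a * b ^ p <= ((a + INR p * b) / INR (S p)) ^ S p.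
Proof.
  intros Ha Hb.
  assert (Hp1 : 1 <= INR (S p)) by (rewrite S_INR; pose proof (pos_INR p); lra).
  set (h := (a / b - 1) / INR (S p)).
  assert (Eh : 1 + INR (S p) * h = a / b) by (unfold h; field; lra).
  assert (Hab : 0 <= a / b) by (apply Rle_mult_inv_pos; lra).
  assert (Hh : -1 <= h) by nra.
  assert (E : (a + INR p * b) / INR (S p) = b * (1 + h))
    by (unfold h; rewrite S_INR in *; field; lra).
  rewrite E, Rpow_mult_distr.
  pose proof (bernoulli_ineq (S p) h Hh) as B. rewrite Eh in B.
  cbn [pow] in *.
  assert (0 < b ^ p) by (apply pow_lt; lra).
  replace (a * b ^ p) with (b * b ^ p * (a / b)) by (field; lra).
  apply Rmult_le_compat_l; nra.
Qed.

Fixpoint psum (f : nat -> R) (n : nat) : R :=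
  match n with O => 0 | S k => psum f k + f (S k) end.

Lemma psum_shift (f : nat -> R) (k n : nat) :
  psum (fun i => f (k + i)%nat) (S n) = f (S k) + psum (fun i => f (S k + i)%nat) n.
Proof.
  induction n as [|n IH].
  - simpl. replace (k + 1)%nat with (S k) by lia. lra.
  - cbn [psum] in *. rewrite IH. replace (k + S (S n))%nat with (S k + S n)%nat by lia. lra.
Qed.

Lemma psum_add (f : nat -> R) (k n : nat) :
  psum f (k + n) = psum f k + psum (fun i => f (k + i)%nat) n.
Proof.
  induction n as [|n IH]; simpl.
  - rewrite Nat.add_0_r. lra.
  - rewrite Nat.add_succ_r. simpl. rewrite IH. lra.
Qed.

Lemma psum_le_mono (f : nat -> R) (k n : nat) :
  (forall i, (1 <= i)%nat -> 0 <= f i) -> (k <= n)%nat -> psum f k <= psum f n.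
Proof.
  intros Hf H. induction H; [lra|]. simpl. pose proof (Hf (S m) ltac:(lia)). lra.
Qed.

Lemma psum_ge_const (f : nat -> R) (n : nat) (c : R) :
  (forall i, (1 <= i <= n)%nat -> c <= f i) -> INR n * c <= psum f n.
Proof.
  induction n as [|n IH]; intros H; simpl psum; [simpl; lra|].
  rewrite S_INR. assert (c <= f (S n)) by (apply H; lia).
  assert (INR n * c <= psum f n) by (apply IH; intros; apply H; lia). lra.
Qed.

Lemma ln_le (a b : R) : 0 < a -> a <= b -> ln a <= ln b.
Proof.
  intros Ha Hab. destruct (Rle_lt_or_eq_dec _ _ Hab) as [L|E]; [|rewrite E; lra].
  left. apply ln_increasing; assumption.
Qed.

(* The potential [sum_{i=1}^p u (k + i) - p u k] is nonnegative and drops by [c] at each step. *)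
Lemma window_growth_le (u : nat -> R) (k0 p : nat) (c : R) :
  (forall k, (k0 <= k)%nat -> u k <= u (S k)) ->
  (forall k, (k0 <= k)%nat -> u (k + S p)%nat + INR p * u k + c <= INR (S p) * u (S k)) ->
  c <= 0.
Proof.
  intros Hmono Hwin.
  destruct (Rle_dec c 0) as [|Hc]; [assumption|exfalso].
  assert (Hu : forall k j, (k0 <= k)%nat -> (k <= j)%nat -> u k <= u j).
  { intros k j Hk Hj. induction Hj; [lra|]. pose proof (Hmono m ltac:(lia)). lra. }
  set (T := fun k => psum (fun i => u (k + i)%nat) p - INR p * u k).
  assert (HT0 : forall k, (k0 <= k)%nat -> 0 <= T k).
  { intros k Hk. unfold T.
    assert (INR p * u k <= psum (fun i => u (k + i)%nat) p); [|lra].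
    apply psum_ge_const. intros. apply Hu; lia. }
  assert (Hstep : forall k, (k0 <= k)%nat -> T (S k) <= T k - c).
  { intros k Hk. unfold T.
    pose proof (psum_shift u k p) as Sh. cbn [psum] in Sh.
    pose proof (Hwin k Hk). rewrite S_INR in *. lra. }
  assert (Hiter : forall n, T (k0 + n)%nat <= T k0 - INR n * c).
  { induction n as [|n IH]; [rewrite Nat.add_0_r; simpl; lra|].
    rewrite Nat.add_succ_r, S_INR. pose proof (Hstep (k0 + n)%nat ltac:(lia)). lra. }
  destruct (INR_archimed c (T k0) ltac:(lra)) as [n Hn].
  pose proof (Hiter n). pose proof (HT0 (k0 + n)%nat ltac:(lia)). lra.
Qed.

Lemma growth_constant_le (a : nat -> R) (k0 p : nat) (K Ks : R) :
  0 < K -> 0 < Ks ->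
  (forall k, (k0 <= k)%nat -> 0 < a k /\ a k <= a (S k)) ->
  (forall k, (k0 <= k)%nat -> a (k + S p)%nat * a k ^ p * Ks <= K * a (S k) ^ S p) ->
  Ks <= K.
Proof.
  intros HK HKs Ha Hrec.
  assert (Hpos : forall j, (k0 <= j)%nat -> 0 < a j) by (intros; apply Ha; auto).
  assert (Hln : ln Ks - ln K <= 0).
  { apply (window_growth_le (fun k => ln (a k)) k0 p).
    - intros k Hk. apply ln_le; apply Ha; auto.
    - intros k Hk. cbv beta.
      pose proof (Hpos (k + S p)%nat ltac:(lia)). pose proof (Hpos k Hk).
      pose proof (Hpos (S k) ltac:(lia)).
      assert (0 < a k ^ p) by (apply pow_lt; auto).
      assert (0 < a (S k) ^ S p) by (apply pow_lt; auto).
      assert (0 < a (k + S p)%nat * a k ^ p) by (apply Rmult_lt_0_compat; auto).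
      assert (L : ln (a (k + S p)%nat * a k ^ p * Ks) <= ln (K * a (S k) ^ S p))
        by (apply ln_le; [apply Rmult_lt_0_compat|]; auto).
      rewrite (ln_mult K), (ln_pow (a (S k))), ln_mult, ln_mult, (ln_pow (a k)) in L
        by assumption.
      lra. }
  destruct (Rle_dec Ks K) as [|Hn]; [assumption|].
  assert (ln K < ln Ks) by (apply ln_increasing; lra). lra.
Qed.

Lemma cyclic_rays_small (m j : nat) : (1 <= j <= m)%nat -> cyclic_rays m j = j.
Proof.
  intros H. unfold cyclic_rays.
  destruct (Nat.eq_dec j m) as [->|Hne].
  - rewrite Nat.Div0.mod_same. reflexivity.
  - rewrite Nat.mod_small by lia. destruct (Nat.eqb_spec j 0); lia.
Qed.

Lemma cyclic_rays_add_mul (m n k : nat) : cyclic_rays m (n + k * m) = cyclic_rays m n.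
Proof. unfold cyclic_rays. rewrite Nat.Div0.mod_add. reflexivity. Qed.

Lemma cyclic_rays_range (m i : nat) : (1 <= m)%nat -> (1 <= cyclic_rays m i <= m)%nat.
Proof.
  intros Hm. unfold cyclic_rays. destruct (Nat.eqb_spec (i mod m) 0); [lia|].
  pose proof (Nat.mod_upper_bound i m ltac:(lia)). lia.
Qed.

Lemma step_costs_mono (x : nat -> R) (t : R) (a b : nat) :
  0 <= t -> (forall i, (1 <= i)%nat -> 0 <= x i) -> (a <= b)%nat ->
  step_costs x t a <= step_costs x t b.
Proof.
  intros Ht Hx H. induction H; [lra|]. simpl. pose proof (Hx (S m) ltac:(lia)). lra.
Qed.

Lemma cyclic_is_strategy (m : nat) (lam delta : R) (x : nat -> R) :
  (1 <= m)%nat -> 0 < lam -> 0 < delta -> (forall i, lam + INR i * delta <= x i) ->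
  is_strategy m x (cyclic_rays m).
Proof.
  intros Hm Hl Hd Hx. split.
  - intros i Hi. split; [|apply cyclic_rays_range; auto].
    pose proof (Hx i). assert (0 <= INR i * delta) by (apply Rmult_le_pos; [apply pos_INR|lra]). lra.
  - intros ray Hray B.
    destruct (INR_archimed delta B Hd) as [N HN].
    exists (ray + N * m)%nat. split; [lia|]. split.
    + rewrite cyclic_rays_add_mul. apply cyclic_rays_small; lia.
    + pose proof (Hx (ray + N * m)%nat).
      assert (INR N <= INR (ray + N * m)) by (apply le_INR; nia).
      assert (INR N * delta <= INR (ray + N * m) * delta) by (apply Rmult_le_compat_r; lra).
      lra.
Qed.

Lemma cyclic_competitive_ratio (p : nat) (t lam C : R) (x : nat -> R) :
  0 <= t -> 0 < lam -> 1 <= C -> x 0%nat = lam -> (forall i, lam <= x i) ->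
  (forall n, step_costs x t (n + p) = (C - 1) * x n) ->
  has_competitive_ratio (S p) lam t x (cyclic_rays (S p)) C.
Proof.
  intros Ht Hl HC Hx0 Hxl Hid.
  assert (Hx : forall i, (1 <= i)%nat -> 0 <= x i) by (intros i _; pose proof (Hxl i); lra).
  assert (Hp : step_costs x t p = (C - 1) * lam) by (rewrite <- Hx0; apply (Hid 0%nat)).
  split.
  - intros q [ray [D [c [Hray [HD [[j [Hj [Hrj [HDj [Hmin Hc]]]]] Hq]]]]]].
    subst q c. apply Rmult_le_reg_r with D; [lra|].
    replace ((step_costs x t (j - 1) + D) / D * D) with (step_costs x t (j - 1) + D)
      by (field; lra).
    destruct (Compare_dec.le_lt_dec j (S p)) as [Hjm|Hjm].
    + assert (step_costs x t (j - 1) <= step_costs x t p)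
        by (apply step_costs_mono; auto; lia).
      assert ((C - 1) * lam <= (C - 1) * D) by (apply Rmult_le_compat_l; lra).
      lra.
    + set (n := (j - S p)%nat).
      assert (Hrn : cyclic_rays (S p) n = ray).
      { rewrite <- Hrj. replace j with (n + 1 * S p)%nat by (unfold n; lia).
        rewrite cyclic_rays_add_mul. reflexivity. }
      assert (HDn : x n < D).
      { apply Rnot_le_lt. intro Hle. apply (Hmin n); [unfold n; lia | lia | auto]. }
      replace (j - 1)%nat with (n + p)%nat by (unfold n; lia).
      rewrite Hid.
      assert ((C - 1) * x n <= (C - 1) * D) by (apply Rmult_le_compat_l; lra).
      lra.
  - intros b Hb. apply Hb.
    exists (S p), lam, (step_costs x t p + lam).
    split; [lia|]. split; [lra|]. split.
    + exists (S p). split; [lia|]. split; [apply cyclic_rays_small; lia|].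
      split; [apply Hxl|]. split.
      * intros i Hi1 Hi2 [Hr _]. rewrite cyclic_rays_small in Hr by lia. lia.
      * replace (S p - 1)%nat with p by lia. reflexivity.
    + rewrite Hp. field. lra.
Qed.

Definition affine_geometric (A B q s lam : R) (i : nat) : R :=
  ((A * INR i + B) * q ^ i - s) * lam.

Lemma step_costs_affine_geometric (A B q s lam t : R) (k : nat) :
  q <> 1 -> t = 2 * s * lam ->
  let d := / (q - 1) in
  step_costs (affine_geometric A B q s lam) t k
  = 2 * lam * (d * q ^ S k * (A * (INR k - d) + B) - d * q * (B - A * d)).
Proof.
  intros Hq Ht d. induction k as [|k IH].
  - simpl. ring.
  - cbn [step_costs]. rewrite IH. unfold affine_geometric, d. rewrite Ht, S_INR.
    cbn [pow]. field. lra.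
Qed.

Lemma affine_geometric_cost_identity (A B q s lam t : R) (p : nat) :
  q <> 1 -> t = 2 * s * lam -> A * (INR p - / (q - 1)) = 0 -> B - A / (q - 1) = q ^ p * s ->
  forall n, step_costs (affine_geometric A B q s lam) t (n + p)
    = 2 * (q ^ S p / (q - 1)) * affine_geometric A B q s lam n.
Proof.
  intros Hq Ht HA HB n. rewrite step_costs_affine_geometric by assumption.
  unfold Rdiv in HB. rewrite HB, plus_INR.
  replace (A * (INR n + INR p - / (q - 1)) + B) with (A * INR n + B) by lra.
  unfold affine_geometric. replace (S (n + p)) with (n + S p)%nat by lia.
  rewrite pow_add. cbn [pow]. field. lra.
Qed.

Lemma affine_geometric_ge (A q s lam : R) (i : nat) :
  0 <= A -> 1 < q -> 0 <= s -> 0 < lam ->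
  lam + INR i * ((q - 1) * lam) <= affine_geometric A (1 + s) q s lam i.
Proof.
  intros HA Hq Hs Hl. unfold affine_geometric.
  pose proof (bernoulli_ineq i (q - 1) ltac:(lra)) as Bi.
  replace (1 + (q - 1)) with q in Bi by ring.
  pose proof (pos_INR i).
  assert (0 <= q ^ i) by (apply pow_le; lra).
  assert (0 <= A * INR i * q ^ i) by (repeat apply Rmult_le_pos; lra).
  assert (0 <= INR i * (q - 1)) by (apply Rmult_le_pos; lra).
  replace (lam + INR i * ((q - 1) * lam)) with ((1 + INR i * (q - 1)) * lam) by ring.
  apply Rmult_le_compat_r; nra.
Qed.

Lemma affine_geometric_cyclic (p : nat) (A q s lam t : R) :
  0 < lam -> 0 <= s -> t = 2 * s * lam -> 1 < q -> 0 <= A ->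
  A * (INR p - / (q - 1)) = 0 -> 1 + s - A / (q - 1) = q ^ p * s ->
  let x := affine_geometric A (1 + s) q s lam in
  is_strategy (S p) x (cyclic_rays (S p)) /\
  has_competitive_ratio (S p) lam t x (cyclic_rays (S p)) (1 + 2 * (q ^ S p / (q - 1))).
Proof.
  intros Hl Hs Ht Hq HA HAp HB x.
  assert (Hx : forall i, lam + INR i * ((q - 1) * lam) <= x i)
    by (intro i; apply affine_geometric_ge; auto).
  split.
  - apply (cyclic_is_strategy _ lam ((q - 1) * lam)); auto; [lia|nra].
  - assert (0 < q ^ S p / (q - 1)) by (apply Rdiv_lt_0_compat; [apply pow_lt|]; lra).
    assert (0 <= t) by (rewrite Ht; apply Rmult_le_pos; lra).
    apply cyclic_competitive_ratio; auto; try lra.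
    + unfold x, affine_geometric. simpl. ring.
    + intro i. pose proof (Hx i). pose proof (pos_INR i).
      assert (0 <= INR i * ((q - 1) * lam)) by (apply Rmult_le_pos; nra). lra.
    + intro n. unfold x.
      rewrite (affine_geometric_cost_identity A (1 + s) q s lam t p) by (auto; lra). ring.
Qed.

Definition sum_over (f : nat -> R) (l : list nat) : R :=
  fold_right (fun a acc => f a + acc) 0 l.

Lemma sum_over_ext_in (f g : nat -> R) (l : list nat) :
  (forall a, In a l -> f a = g a) -> sum_over f l = sum_over g l.
Proof.
  induction l as [|a l IH]; intros H; simpl; auto.
  rewrite (H a (or_introl eq_refl)), IH; auto. intros b Hb; apply H; right; auto.
Qed.

Lemma sum_over_le (f g : nat -> R) (l : list nat) :
  (forall a, In a l -> f a <= g a) -> sum_over f l <= sum_over g l.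
Proof.
  induction l as [|a l IH]; intros H; simpl; [lra|].
  pose proof (H a (or_introl eq_refl)). pose proof (IH (fun b Hb => H b (or_intror Hb))). lra.
Qed.

Lemma sum_over_plus (f g : nat -> R) (l : list nat) :
  sum_over (fun a => f a + g a) l = sum_over f l + sum_over g l.
Proof. induction l; simpl; lra. Qed.

Lemma sum_over_const (c : R) (l : list nat) : sum_over (fun _ => c) l = INR (length l) * c.
Proof.
  induction l as [|a l IH]; simpl length; [simpl; lra|]. rewrite S_INR. simpl. rewrite IH. lra.
Qed.

Lemma sum_over_update (g g' : nat -> R) (l : list nat) (p : nat) (d : R) :
  NoDup l -> In p l -> (forall a, a <> p -> g' a = g a) -> g' p = g p + d ->
  sum_over g' l = sum_over g l + d.
Proof.
  intros Hnd Hin Ho Hp. induction l as [|a l IH]; [destruct Hin|].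
  apply NoDup_cons_iff in Hnd as [Hni Hnd']. simpl. destruct Hin as [<-|Hin].
  - rewrite Hp, (sum_over_ext_in g' g); [lra|].
    intros b Hb. apply Ho. intros ->. contradiction.
  - rewrite (IH Hnd' Hin), Ho by (intros ->; contradiction). lra.
Qed.

Lemma sum_over_filter_neq (f : nat -> R) (b : nat) (l : list nat) :
  sum_over (fun a => if Nat.eqb a b then 0 else f a) l
  = sum_over f (filter (fun a => negb (Nat.eqb a b)) l).
Proof.
  induction l as [|a l IH]; simpl; auto. destruct (Nat.eqb a b); simpl; rewrite IH; lra.
Qed.

Lemma sum_over_split (f : nat -> R) (a : nat) (l : list nat) : NoDup l -> In a l ->
  sum_over f l = f a + sum_over f (filter (fun b => negb (Nat.eqb b a)) l).
Proof.
  intros Hnd Ha. rewrite <- sum_over_filter_neq.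
  rewrite (sum_over_update (fun b => if Nat.eqb b a then 0 else f b) f l a (f a)); auto; [lra| |].
  - intros b Hb. apply Nat.eqb_neq in Hb. rewrite Hb. reflexivity.
  - rewrite Nat.eqb_refl. lra.
Qed.

Lemma length_filter_neq (b : nat) (l : list nat) : NoDup l -> In b l ->
  length (filter (fun a => negb (Nat.eqb a b)) l) = (length l - 1)%nat.
Proof.
  induction l as [|a l IH]; intros Hnd Hin; [destruct Hin|].
  apply NoDup_cons_iff in Hnd as [Hni Hnd']. simpl.
  destruct (Nat.eqb_spec a b) as [->|N]; simpl.
  - rewrite forallb_filter_id; [lia|].
    apply forallb_forall. intros c Hc. destruct (Nat.eqb_spec c b); [subst; contradiction|auto].
  - destruct Hin as [->|Hin]; [contradiction|]. rewrite IH; auto.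
    destruct l; [destruct Hin|]. simpl. lia.
Qed.

Lemma in_rays (m rho : nat) : In rho (seq 1 m) <-> (1 <= rho <= m)%nat.
Proof. rewrite in_seq. lia. Qed.

Lemma exists_argmin_ray (f : nat -> R) (m : nat) : (1 <= m)%nat ->
  exists rho, (1 <= rho <= m)%nat /\ forall rho', (1 <= rho' <= m)%nat -> f rho <= f rho'.
Proof.
  induction m as [|m IH]; intros H; [lia|].
  destruct (Nat.eq_dec m 0) as [->|Hm].
  - exists 1%nat. split; [lia|]. intros rho' Hr. replace rho' with 1%nat by lia. lra.
  - destruct (IH ltac:(lia)) as [a [Ha Hmin]].
    destruct (Rle_dec (f a) (f (S m))).
    + exists a. split; [lia|]. intros b Hb.
      destruct (Nat.eq_dec b (S m)) as [->|]; [auto|]. apply Hmin; lia.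
    + exists (S m). split; [lia|]. intros b Hb.
      destruct (Nat.eq_dec b (S m)) as [->|]; [lra|]. pose proof (Hmin b ltac:(lia)). lra.
Qed.

Definition first_hit (P : nat -> Prop) (n : nat) : Prop :=
  (1 <= n)%nat /\ P n /\ forall i, (1 <= i)%nat -> (i < n)%nat -> ~ P i.

Lemma exists_first_hit (P : nat -> Prop) :
  (exists n, (1 <= n)%nat /\ P n) -> exists n, first_hit P n.
Proof.
  intros [n [Hn HP]].
  induction n as [n IH] using (well_founded_induction Wf_nat.lt_wf).
  destruct (classic (exists i, (1 <= i)%nat /\ (i < n)%nat /\ P i)) as [[i [Hi1 [Hi2 Hi3]]]|Hno].
  - exact (IH i Hi2 Hi1 Hi3).
  - exists n. split; [auto|]. split; [auto|]. intros i H1 H2 H3. apply Hno. eauto.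
Qed.

Section Records.

Variables (m : nat) (x : nat -> R) (r : nat -> nat).
Hypothesis Hs : is_strategy m x r.

Definition first_exceed (rho : nat) (v : R) : nat :=
  epsilon (inhabits 0%nat) (first_hit (fun i => r i = rho /\ v < x i)).

(* [record rho j] is the depth of the j-th step on ray [rho] that goes deeper than all earlier ones. *)
Fixpoint record (rho j : nat) : R :=
  match j with
  | O => 0
  | S j' => x (first_exceed rho (record rho j'))
  end.

Lemma first_exceed_spec (rho : nat) (v : R) : (1 <= rho <= m)%nat ->
  first_hit (fun i => r i = rho /\ v < x i) (first_exceed rho v).
Proof.
  intros Hr. unfold first_exceed. apply epsilon_spec, exists_first_hit.
  destruct (proj2 Hs rho Hr v) as [i [Hi [Hri Hxi]]]. eauto.
Qed.

Lemma le_before_first_exceed (rho i : nat) (v : R) : (1 <= rho <= m)%nat ->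
  (1 <= i)%nat -> (i < first_exceed rho v)%nat -> r i = rho -> x i <= v.
Proof.
  intros Hr Hi1 Hi2 Hri. destruct (first_exceed_spec rho v Hr) as [_ [_ Hmin]].
  apply Rnot_lt_le. intro. exact (Hmin i Hi1 Hi2 (conj Hri H)).
Qed.

Lemma record_lt_S (rho j : nat) : (1 <= rho <= m)%nat -> record rho j < record rho (S j).
Proof. intros Hr. exact (proj2 (proj1 (proj2 (first_exceed_spec rho (record rho j) Hr)))). Qed.

Lemma record_le (rho j k : nat) : (1 <= rho <= m)%nat -> (j <= k)%nat ->
  record rho j <= record rho k.
Proof.
  intros Hr H. induction H; [lra|]. pose proof (record_lt_S rho m0 Hr). lra.
Qed.

Lemma first_exceed_record_lt (rho j : nat) : (1 <= rho <= m)%nat ->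
  (first_exceed rho (record rho j) < first_exceed rho (record rho (S j)))%nat.
Proof.
  intros Hr.
  destruct (first_exceed_spec rho (record rho j) Hr) as [_ [[Hrn Hxn] Hmn]].
  destruct (first_exceed_spec rho (record rho (S j)) Hr) as [Hn1' [[Hrn' Hxn'] _]].
  destruct (Compare_dec.lt_eq_lt_dec (first_exceed rho (record rho j))
              (first_exceed rho (record rho (S j)))) as [[L|E]|G]; auto; exfalso.
  - rewrite <- E in Hxn'.
    change (x (first_exceed rho (record rho j))) with (record rho (S j)) in Hxn'. lra.
  - apply (Hmn _ Hn1' G). split; auto. pose proof (record_lt_S rho j Hr). lra.
Qed.

Lemma record_unbounded (rho : nat) (B : R) : (1 <= rho <= m)%nat -> exists j, B < record rho j.
Proof.
  intros Hr. destruct (proj2 Hs rho Hr B) as [n [Hn [Hrn HBn]]].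
  apply NNPP. intro Hno.
  assert (Hge : forall j, (S j <= first_exceed rho (record rho j))%nat).
  { induction j as [|j IH].
    - exact (proj1 (first_exceed_spec rho 0 Hr)).
    - pose proof (first_exceed_record_lt rho j Hr). lia. }
  assert (Hle : forall j, (first_exceed rho (record rho j) <= n)%nat).
  { intro j. apply Nat.nlt_ge. intro L.
    apply (proj2 (proj2 (first_exceed_spec rho (record rho j) Hr)) n Hn L). split; auto.
    apply Rle_lt_trans with B; auto. apply Rnot_lt_le. intro. apply Hno. eauto. }
  pose proof (Hle n). pose proof (Hge n). lia.
Qed.

Definition ray_load (rho N : nat) : R := psum (fun n => if Nat.eqb (r n) rho then x n else 0) N.

Lemma ray_load_le (rho N N' : nat) : (N <= N')%nat -> ray_load rho N <= ray_load rho N'.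
Proof.
  apply psum_le_mono. intros n Hn. destruct (Nat.eqb (r n) rho); [|lra].
  left. apply (proj1 Hs n Hn).
Qed.

Lemma psum_eq_sum_ray_loads (N : nat) : psum x N = sum_over (fun rho => ray_load rho N) (seq 1 m).
Proof.
  induction N as [|N IH].
  - unfold ray_load. simpl. rewrite (sum_over_const 0). lra.
  - change (psum x (S N)) with (psum x N + x (S N)). rewrite IH.
    unfold ray_load. cbn [psum]. rewrite sum_over_plus.
    rewrite (sum_over_update (fun _ => 0) (fun rho => if Nat.eqb (r (S N)) rho then x (S N) else 0)
               (seq 1 m) (r (S N)) (x (S N))).
    + rewrite sum_over_const. lra.
    + apply seq_NoDup.
    + apply in_rays, (proj1 Hs). lia.
    + intros rho N'. destruct (Nat.eqb_spec (r (S N)) rho); [subst; contradiction|auto].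
    + rewrite Nat.eqb_refl. lra.
Qed.

Lemma ray_load_at (rho N : nat) : (1 <= N)%nat -> r N = rho ->
  ray_load rho N = ray_load rho (N - 1) + x N.
Proof.
  intros HN HrN. destruct N as [|N]; [lia|].
  replace (S N - 1)%nat with N by lia.
  unfold ray_load. cbn [psum]. rewrite HrN, Nat.eqb_refl. reflexivity.
Qed.

Lemma psum_record_le_ray_load_before (rho j : nat) : (1 <= rho <= m)%nat ->
  psum (record rho) j <= ray_load rho (first_exceed rho (record rho j) - 1).
Proof.
  intros Hr. induction j as [|j IH].
  - apply (ray_load_le rho 0). lia.
  - destruct (first_exceed_spec rho (record rho j) Hr) as [H1 [[H2 _] _]].
    pose proof (first_exceed_record_lt rho j Hr).
    pose proof (ray_load_le rho (first_exceed rho (record rho j))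
                  (first_exceed rho (record rho (S j)) - 1) ltac:(lia)).
    rewrite (ray_load_at rho (first_exceed rho (record rho j))) in H0 by auto.
    change (psum (record rho) (S j)) with (psum (record rho) j + x (first_exceed rho (record rho j))).
    lra.
Qed.

Lemma psum_record_le_ray_load (rho j : nat) : (1 <= rho <= m)%nat ->
  psum (record rho) (S j) <= ray_load rho (first_exceed rho (record rho j)).
Proof.
  intros Hr. destruct (first_exceed_spec rho (record rho j) Hr) as [H1 [[H2 _] _]].
  rewrite ray_load_at by auto. pose proof (psum_record_le_ray_load_before rho j Hr).
  change (psum (record rho) (S j)) with (psum (record rho) j + x (first_exceed rho (record rho j))).
  lra.
Qed.

End Records.

Section Merge.

Variables (m : nat) (L : nat -> nat -> R).
Hypothesis Hm : (1 <= m)%nat.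
Hypothesis L_0 : forall rho, L rho 0%nat = 0.
Hypothesis L_lt_S : forall rho j, (1 <= rho <= m)%nat -> L rho j < L rho (S j).

Definition next_value (c : nat -> nat) (rho : nat) : R := L rho (S (c rho)).

Definition pick (c : nat -> nat) : nat :=
  epsilon (inhabits 1%nat) (fun rho => (1 <= rho <= m)%nat /\
    forall rho', (1 <= rho' <= m)%nat -> next_value c rho <= next_value c rho').

(* [merged] enumerates the values [L rho j], [j >= 1], of all rays in nondecreasing order;
   [merge_count k rho] of the first [k] of them come from ray [rho]. *)
Fixpoint merge_count (k : nat) : nat -> nat :=
  match k with
  | O => fun _ => O
  | S k' => fun rho => if Nat.eqb rho (pick (merge_count k')) then S (merge_count k' rho)
                       else merge_count k' rho
  end.

Definition merged (k : nat) : R :=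
  match k with
  | O => 0
  | S k' => next_value (merge_count k') (pick (merge_count k'))
  end.

Lemma pick_spec (c : nat -> nat) : (1 <= pick c <= m)%nat /\
  forall rho, (1 <= rho <= m)%nat -> next_value c (pick c) <= next_value c rho.
Proof.
  unfold pick. apply epsilon_spec. apply exists_argmin_ray. exact Hm.
Qed.

Lemma L_nonneg (rho j : nat) : (1 <= rho <= m)%nat -> 0 <= L rho j.
Proof.
  intros Hr. induction j as [|j IH]; [rewrite L_0; lra|].
  pose proof (L_lt_S rho j Hr). lra.
Qed.

Lemma next_value_merge_count_S (k rho : nat) : rho <> pick (merge_count k) ->
  next_value (merge_count (S k)) rho = next_value (merge_count k) rho.
Proof.
  intros Hne. unfold next_value. cbn [merge_count].
  apply Nat.eqb_neq in Hne. rewrite Hne. reflexivity.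
Qed.

Lemma merged_between (k : nat) :
  (forall rho, (1 <= rho <= m)%nat -> L rho (merge_count k rho) <= merged k) /\
  (forall rho, (1 <= rho <= m)%nat -> merged k <= next_value (merge_count k) rho).
Proof.
  induction k as [|k [IH1 IH2]].
  - split; intros rho Hr; cbn; [rewrite L_0; lra|]. apply L_nonneg. exact Hr.
  - destruct (pick_spec (merge_count k)) as [Hpr Hpmin].
    set (p := pick (merge_count k)) in *.
    assert (Hmerged : merged (S k) = next_value (merge_count k) p) by reflexivity.
    split; intros rho Hr; destruct (Nat.eq_dec rho p) as [->|N].
    + cbn [merge_count]. fold p. rewrite Nat.eqb_refl, Hmerged. unfold next_value. lra.
    + cbn [merge_count]. fold p. apply Nat.eqb_neq in N as N'. rewrite N'.
      pose proof (IH1 rho Hr). pose proof (IH2 p Hpr). lra.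
    + rewrite Hmerged. unfold next_value. cbn [merge_count]. fold p. rewrite Nat.eqb_refl.
      left. apply L_lt_S. exact Hpr.
    + rewrite next_value_merge_count_S by exact N. rewrite Hmerged. apply Hpmin. exact Hr.
Qed.

Lemma merged_le_S (k : nat) : merged k <= merged (S k).
Proof. apply (proj2 (merged_between k)), pick_spec. Qed.

Lemma merged_pos (k : nat) : 0 < merged (S k).
Proof.
  destruct (pick_spec (merge_count k)) as [Hpr _]. cbn [merged]. unfold next_value.
  pose proof (L_lt_S _ (merge_count k (pick (merge_count k))) Hpr).
  pose proof (L_nonneg _ (merge_count k (pick (merge_count k))) Hpr). lra.
Qed.

Lemma psum_merged (k : nat) :
  psum merged k = sum_over (fun rho => psum (L rho) (merge_count k rho)) (seq 1 m).
Proof.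
  induction k as [|k IH].
  - rewrite (sum_over_ext_in _ (fun _ => 0)) by reflexivity. rewrite sum_over_const. simpl. lra.
  - cbn [psum]. rewrite IH. symmetry.
    destruct (pick_spec (merge_count k)) as [Hpr _].
    apply sum_over_update with (pick (merge_count k)).
    + apply seq_NoDup.
    + apply in_rays. exact Hpr.
    + intros rho N. cbn [merge_count]. apply Nat.eqb_neq in N. rewrite N. reflexivity.
    + cbn [merge_count]. rewrite Nat.eqb_refl. reflexivity.
Qed.

Lemma merge_count_total (k : nat) :
  sum_over (fun rho => INR (merge_count k rho)) (seq 1 m) = INR k.
Proof.
  induction k as [|k IH].
  - rewrite (sum_over_ext_in _ (fun _ => 0)) by reflexivity. rewrite sum_over_const. simpl. lra.
  - rewrite S_INR, <- IH.
    destruct (pick_spec (merge_count k)) as [Hpr _].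
    apply sum_over_update with (pick (merge_count k)).
    + apply seq_NoDup.
    + apply in_rays. exact Hpr.
    + intros rho N. cbn [merge_count]. apply Nat.eqb_neq in N. rewrite N. reflexivity.
    + cbn [merge_count]. rewrite Nat.eqb_refl. apply S_INR.
Qed.

Lemma psum_merged_le_next_values (n k : nat) (P : list nat) :
  length P = n -> NoDup P -> (forall a, In a P -> (1 <= a <= m)%nat) ->
  psum (fun i => merged (k + i)%nat) n <= sum_over (next_value (merge_count k)) P.
Proof.
  revert k P. induction n as [|n IH]; intros k P HL Hnd HP.
  - destruct P; [simpl; lra|discriminate].
  - set (p := pick (merge_count k)).
    destruct (pick_spec (merge_count k)) as [_ Hpmin]. fold p in Hpmin.
    assert (Ha : exists a, In a P /\ (In p P -> a = p)).
    { destruct (in_dec Nat.eq_dec p P) as [Hin|Hnin]; [exists p; auto|].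
      destruct P as [|a P]; [discriminate|]. exists a. split; [left; auto|tauto]. }
    destruct Ha as [a [Ha Hap]].
    set (P' := filter (fun b => negb (Nat.eqb b a)) P).
    assert (HP' : forall b, In b P' -> In b P /\ b <> a).
    { intros b Hb. apply filter_In in Hb as [Hb Hne]. split; auto.
      apply Bool.negb_true_iff, Nat.eqb_neq in Hne. exact Hne. }
    rewrite psum_shift, (sum_over_split _ a P Hnd Ha). fold P'.
    assert (Hfirst : merged (S k) <= next_value (merge_count k) a) by (apply Hpmin, HP, Ha).
    assert (Hrest : sum_over (next_value (merge_count (S k))) P'
                    = sum_over (next_value (merge_count k)) P').
    { apply sum_over_ext_in. intros b Hb. apply next_value_merge_count_S.
      destruct (HP' b Hb) as [Hb' Hba]. intros ->. exact (Hba (eq_sym (Hap Hb'))). }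
    assert (psum (fun i => merged (S k + i)%nat) n <= sum_over (next_value (merge_count (S k))) P').
    { apply IH.
      - unfold P'. rewrite length_filter_neq; auto. lia.
      - apply NoDup_filter. exact Hnd.
      - intros b Hb. apply HP, HP', Hb. }
    lra.
Qed.

End Merge.

Lemma step_costs_ge_psum (x : nat -> R) (t : R) (N : nat) :
  0 <= t -> 2 * psum x N <= step_costs x t N.
Proof. intros Ht. induction N; simpl; lra. Qed.

Lemma le_mul_of_forall_gt (a c M : R) : (forall D, M < D -> a <= c * D) -> a <= c * M.
Proof.
  intros H. apply Rnot_lt_le. intro Hlt.
  destruct (Rle_dec c 0).
  - pose proof (H (M + 1) ltac:(lra)). nra.
  - set (e := (a - c * M) / (2 * c)).
    assert (He : 0 < e) by (apply Rdiv_lt_0_compat; lra).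
    pose proof (H (M + e) ltac:(lra)).
    assert (c * (M + e) = c * M + (a - c * M) / 2) by (unfold e; field; lra). lra.
Qed.

Lemma amgm_window (p : nat) (a S0 S1 K : R) :
  (1 <= p)%nat -> 0 < K -> 0 <= a -> 0 < S0 -> a + K * S0 <= K * S1 ->
  a * S0 ^ p * (INR (S p) ^ S p / INR p ^ p) <= K * S1 ^ S p.
Proof.
  intros Hp HK Ha HS0 Hsum.
  assert (HP : 1 <= INR p) by (apply (le_INR 1); exact Hp).
  rewrite S_INR. set (P := INR p) in *.
  assert (Hb : 0 < K * S0 / P) by (apply Rdiv_lt_0_compat; [apply Rmult_lt_0_compat|]; lra).
  assert (Hamgm : a * (K * S0 / P) ^ p <= (K * S1 / (P + 1)) ^ S p).
  { eapply Rle_trans; [apply (amgm_pow p a _ Ha Hb)|].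
    rewrite S_INR. fold P. replace (P * (K * S0 / P)) with (K * S0) by (field; repeat split; lra).
    apply pow_incr. split.
    - apply Rle_mult_inv_pos; nra.
    - unfold Rdiv. apply Rmult_le_compat_r; [apply Rlt_le, Rinv_0_lt_compat|]; lra. }
  assert (HKp : 0 < K ^ p) by (apply pow_lt; lra).
  assert (HPp : 0 < P ^ p) by (apply pow_lt; lra).
  assert (HQp : 0 < (P + 1) ^ S p) by (apply pow_lt; lra).
  apply (Rmult_le_compat_r ((P + 1) ^ S p / K ^ p)) in Hamgm;
    [|apply Rlt_le, Rdiv_lt_0_compat; assumption].
  unfold Rdiv in *. rewrite !Rpow_mult_distr, !pow_inv in Hamgm.
  replace (a * S0 ^ p * ((P + 1) ^ S p * / P ^ p))
    with (a * (K ^ p * S0 ^ p * / P ^ p) * ((P + 1) ^ S p * / K ^ p)) by (field; split; lra).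
  replace (K * S1 ^ S p)
    with (K ^ S p * S1 ^ S p * / (P + 1) ^ S p * ((P + 1) ^ S p * / K ^ p))
    by (change (K ^ S p) with (K * K ^ p); field; split; lra).
  exact Hamgm.
Qed.

Section LowerBound.

Variables (m : nat) (lam t C : R) (x : nat -> R) (r : nat -> nat).
Hypothesis Hs : is_strategy m x r.
Hypothesis Hm : (2 <= m)%nat.
Hypothesis Ht : 0 <= t.
Hypothesis Hlam : 0 < lam.
Hypothesis Hub : forall q, ratios m lam t x r q -> q <= C.

Let Hx : forall i, (1 <= i)%nat -> 0 <= x i.
Proof. intros i Hi. left. apply (proj1 Hs i Hi). Qed.

(* Targets just beyond [V] on ray [rho] are still missed by every step before
   [first_exceed rho v]. *)
Lemma cost_before_first_exceed (rho : nat) (v V : R) :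
  (1 <= rho <= m)%nat -> lam <= V -> v <= V ->
  step_costs x t (first_exceed x r rho v - 1) <= (C - 1) * V.
Proof.
  intros Hr HV HvV. apply le_mul_of_forall_gt. intros D HD.
  destruct (exists_first_hit (fun i => r i = rho /\ D <= x i)) as [j [Hj1 [[Hrj HDj] Hmin]]].
  { destruct (proj2 Hs rho Hr D) as [i [Hi [Hri Hxi]]]. exists i. split; [|split]; auto; lra. }
  assert (Hq : (step_costs x t (j - 1) + D) / D <= C).
  { apply Hub. exists rho, D, (step_costs x t (j - 1) + D).
    split; [exact Hr|]. split; [lra|]. split; [|reflexivity].
    exists j. repeat split; auto. }
  apply (Rmult_le_compat_r D) in Hq; [|lra].
  replace ((step_costs x t (j - 1) + D) / D * D) with (step_costs x t (j - 1) + D) in Hq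
    by (field; lra).
  assert (Hjle : (first_exceed x r rho v <= j)%nat).
  { apply Nat.nlt_ge. intro L.
    pose proof (le_before_first_exceed m x r Hs rho j v Hr Hj1 L Hrj). lra. }
  pose proof (step_costs_mono x t (first_exceed x r rho v - 1) (j - 1) Ht Hx ltac:(lia)).
  lra.
Qed.

Let w := merged m (record x r).

Let record_0 : forall rho, record x r rho 0 = 0.
Proof. reflexivity. Qed.

Let record_lt : forall rho j, (1 <= rho <= m)%nat -> record x r rho j < record x r rho (S j).
Proof. intros. apply (record_lt_S m); auto. Qed.

Let Hm1 : (1 <= m)%nat.
Proof. lia. Qed.

Let next_record_step (k rho : nat) : nat :=
  first_exceed x r rho (record x r rho (merge_count m (record x r) k rho)).

Let others (rho0 : nat) : list nat := filter (fun a => negb (Nat.eqb a rho0)) (seq 1 m).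

(* If ray [rho0] is the last to reach its next record, then before that step every other
   ray has reached its next record and [rho0] its current one. *)
Lemma walked_before_last_record (k rho0 : nat) : (1 <= rho0 <= m)%nat ->
  (forall rho, (1 <= rho <= m)%nat -> (next_record_step k rho <= next_record_step k rho0)%nat) ->
  psum w k + sum_over (next_value (record x r) (merge_count m (record x r) k)) (others rho0)
  <= psum x (next_record_step k rho0 - 1).
Proof.
  intros Hrho0 Hlast.
  set (c := merge_count m (record x r) k).
  rewrite (psum_eq_sum_ray_loads m x r Hs), (psum_merged m (record x r) Hm1).
  fold c. unfold others. rewrite <- sum_over_filter_neq, <- sum_over_plus.
  apply sum_over_le. intros rho Hrho. apply in_rays in Hrho.
  destruct (Nat.eqb_spec rho rho0) as [->|Nr].
  - pose proof (psum_record_le_ray_load_before m x r Hs rho0 (c rho0) Hrho0).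
    unfold next_record_step. fold c. lra.
  - pose proof (psum_record_le_ray_load m x r Hs rho (c rho) Hrho) as Hrec.
    assert (Hne : next_record_step k rho <> next_record_step k rho0).
    { intro E. unfold next_record_step in E. fold c in E.
      destruct (first_exceed_spec m x r Hs rho (record x r rho (c rho)) Hrho) as [_ [[Hrg _] _]].
      destruct (first_exceed_spec m x r Hs rho0 (record x r rho0 (c rho0)) Hrho0)
        as [_ [[Hrg0 _] _]].
      rewrite E, Hrg0 in Hrg. auto. }
    pose proof (Hlast rho Hrho).
    pose proof (ray_load_le m x r Hs rho (next_record_step k rho)
                  (next_record_step k rho0 - 1) ltac:(lia)) as Hload.
    unfold next_record_step in Hload |- *. fold c in Hload |- *.
    cbn [psum] in Hrec. unfold next_value. lra.
Qed.

(* Targets just beyond [w_k] on the ray whose next record comes last. *)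
Lemma window_inequality (k : nat) : lam <= w k ->
  2 * psum w (k + (m - 1)) <= (C - 1) * w k.
Proof.
  intros Hwk.
  destruct (merged_between m (record x r) Hm1 record_0 record_lt k) as [Hbelow _].
  destruct (exists_argmin_ray (fun rho => - INR (next_record_step k rho)) m Hm1)
    as [rho0 [Hrho0 Hmax]].
  assert (Hlast : forall rho, (1 <= rho <= m)%nat ->
                    (next_record_step k rho <= next_record_step k rho0)%nat).
  { intros rho Hr. apply INR_le. pose proof (Hmax rho Hr). lra. }
  assert (Hcost : step_costs x t (next_record_step k rho0 - 1) <= (C - 1) * w k)
    by (apply cost_before_first_exceed; auto).
  pose proof (walked_before_last_record k rho0 Hrho0 Hlast) as Hwalk.
  assert (Hnext : psum (fun i => w (k + i)%nat) (m - 1)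
                  <= sum_over (next_value (record x r) (merge_count m (record x r) k)) (others rho0)).
  { apply (psum_merged_le_next_values m (record x r) Hm1).
    - unfold others. rewrite length_filter_neq, length_seq; auto.
      + apply seq_NoDup.
      + apply in_rays. exact Hrho0.
    - apply NoDup_filter, seq_NoDup.
    - intros a Ha. apply filter_In in Ha as [Ha _]. apply in_rays. exact Ha. }
  pose proof (step_costs_ge_psum x t (next_record_step k rho0 - 1) Ht).
  rewrite psum_add. lra.
Qed.

Let w_pos (k : nat) : (1 <= k)%nat -> 0 < w k.
Proof. destruct k as [|k]; [lia|]. intros _. apply (merged_pos m (record x r) Hm1 record_0 record_lt). Qed.

Let psum_w_pos (k : nat) : (1 <= k)%nat -> 0 < psum w k.
Proof.
  destruct k as [|k]; [lia|]. intros Hk. cbn [psum].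
  pose proof (psum_le_mono w 0 k (fun i Hi => Rlt_le _ _ (w_pos i Hi)) ltac:(lia)).
  pose proof (w_pos (S k) Hk). simpl in *. lra.
Qed.

Lemma merged_eventually_ge : exists k0, lam <= w k0.
Proof.
  assert (Huniform : forall n, (n <= m)%nat ->
            exists N, forall rho, (1 <= rho <= n)%nat -> lam <= record x r rho N).
  { induction n as [|n IH]; intros Hn; [exists O; intros; lia|].
    destruct (IH ltac:(lia)) as [N1 HN1].
    destruct (record_unbounded m x r Hs (S n) lam ltac:(lia)) as [N2 HN2].
    exists (Nat.max N1 N2). intros rho Hr.
    destruct (Nat.eq_dec rho (S n)) as [->|Hne].
    - pose proof (record_le m x r Hs (S n) N2 (Nat.max N1 N2) ltac:(lia) ltac:(lia)). lra.
    - pose proof (record_le m x r Hs rho N1 (Nat.max N1 N2) ltac:(lia) ltac:(lia)).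
      pose proof (HN1 rho ltac:(lia)). lra. }
  destruct (Huniform m (le_n m)) as [N HN].
  exists (m * N)%nat.
  destruct (classic (exists rho, (1 <= rho <= m)%nat /\
                       (N <= merge_count m (record x r) (m * N) rho)%nat)) as [[rho [Hr Hc]]|Hno].
  - destruct (merged_between m (record x r) Hm1 record_0 record_lt (m * N)) as [Hbelow _].
    pose proof (Hbelow rho Hr). pose proof (record_le m x r Hs rho _ _ Hr Hc).
    pose proof (HN rho Hr). unfold w. lra.
  - exfalso.
    assert (Hlt : forall rho, In rho (seq 1 m) ->
              INR (merge_count m (record x r) (m * N) rho) <= INR N - 1).
    { intros rho Hr%in_rays.
      assert (merge_count m (record x r) (m * N) rho < N)%nat
        by (apply Nat.nle_gt; intro; apply Hno; eauto).
      replace (INR N - 1) with (INR (N - 1)) by (rewrite minus_INR by lia; simpl; ring).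
      apply le_INR. lia. }
    pose proof (sum_over_le _ _ _ Hlt) as Hsum.
    rewrite merge_count_total, sum_over_const, length_seq, mult_INR in Hsum by exact Hm1.
    assert (1 <= INR m) by (apply (le_INR 1); lia). nra.
Qed.

Lemma competitive_ratio_ge : 1 + 2 * (INR m ^ m / (INR m - 1) ^ (m - 1)) <= C.
Proof.
  destruct merged_eventually_ge as [k0 Hk0].
  assert (Hk01 : (1 <= k0)%nat) by (destruct k0; [cbn in Hk0; lra|lia]).
  assert (Hwk : forall k, (k0 <= k)%nat -> lam <= w k).
  { intros k Hk. induction Hk; auto.
    pose proof (merged_le_S m (record x r) Hm1 record_0 record_lt m0). unfold w in *. lra. }
  assert (Hwnn : forall i, (1 <= i)%nat -> 0 <= w i) by (intros; apply Rlt_le, w_pos; auto).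
  set (p := (m - 1)%nat). assert (Em : m = S p) by (unfold p; lia).
  assert (HK : 0 < (C - 1) / 2).
  { pose proof (window_inequality k0 (Hk0)) as Hwin.
    pose proof (psum_le_mono w k0 (k0 + (m - 1)) Hwnn ltac:(lia)).
    pose proof (psum_w_pos k0 Hk01). pose proof (w_pos k0 Hk01).
    assert (0 < (C - 1) * w k0) by lra.
    apply Rdiv_lt_0_compat; [|lra]. destruct (Rle_dec (C - 1) 0); [nra|lra]. }
  assert (HP : 1 <= INR p) by (apply (le_INR 1); lia).
  assert (Hgrowth : INR (S p) ^ S p / INR p ^ p <= (C - 1) / 2).
  { apply (growth_constant_le (psum w) k0 p).
    - exact HK.
    - apply Rdiv_lt_0_compat; apply pow_lt; rewrite ?S_INR; lra.
    - intros k Hk. split; [apply psum_w_pos; lia|]. cbn [psum]. pose proof (Hwnn (S k) ltac:(lia)). lra.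
    - intros k Hk. apply amgm_window; try lia; auto.
      + apply (psum_le_mono w 0); auto. lia.
      + apply psum_w_pos. lia.
      + pose proof (window_inequality (S k) (Hwk (S k) ltac:(lia))) as Hwin.
        replace (S k + (m - 1))%nat with (k + S p)%nat in Hwin by lia.
        cbn [psum]. lra. }
  rewrite Em. replace (S p - 1)%nat with p by lia. rewrite S_INR in *.
  replace (INR p + 1 - 1) with (INR p) by ring. lra.
Qed.

End LowerBound.

Section ExplicitStrategies.

Variables (p : nat) (t lam : R).
Hypothesis Hp : (1 <= p)%nat.
Hypothesis Ht : 0 <= t.
Hypothesis Hlam : 0 < lam.

Let P := INR p.
Let HP : 1 <= P.
Proof. apply (le_INR 1). exact Hp. Qed.
Let EP : INR (S p) - 1 = P.
Proof. rewrite S_INR. unfold P. ring. Qed.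

Let s := t / (2 * lam).
Let q := INR (S p) / (INR (S p) - 1).

Let Eq : q = (P + 1) / P.
Proof. unfold q. rewrite EP, S_INR. reflexivity. Qed.
Let Hq1 : q - 1 = / P.
Proof. rewrite Eq. field. lra. Qed.
Let Hq : 1 < q.
Proof. assert (0 < / P) by (apply Rinv_0_lt_compat; lra). lra. Qed.
Let Hqp : 1 < q ^ p.
Proof.
  pose proof (bernoulli_ineq p (q - 1) ltac:(lra)) as B.
  replace (1 + (q - 1)) with q in B by ring. rewrite Hq1 in B. fold P in B.
  assert (P * / P = 1) by (field; lra). lra.
Qed.
Let Ets : t = 2 * s * lam.
Proof. unfold s. field. lra. Qed.
Let Hs0 : 0 <= s.
Proof. unfold s. apply Rle_mult_inv_pos; lra. Qed.

Lemma small_turn_cost_strategy :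
  s <= 1 / (q ^ p - 1) ->
  let x := fun i : nat =>
    (( / (INR (S p) - 1) * (1 - (q ^ p - 1) * s) * INR i + (1 + s)) * q ^ i - s) * lam in
  is_strategy (S p) x (cyclic_rays (S p)) /\
  has_competitive_ratio (S p) lam t x (cyclic_rays (S p))
    (1 + 2 * (INR (S p) ^ S p / (INR (S p) - 1) ^ p)).
Proof.
  intros Hs x.
  set (A := / (INR (S p) - 1) * (1 - (q ^ p - 1) * s)).
  assert (EAP : A * P = 1 - (q ^ p - 1) * s) by (unfold A; rewrite EP; field; lra).
  assert (HA : 0 <= A).
  { assert ((q ^ p - 1) * s <= 1).
    { apply Rmult_le_reg_r with (/ (q ^ p - 1)); [apply Rinv_0_lt_compat; lra|].
      replace ((q ^ p - 1) * s * / (q ^ p - 1)) with s by (field; lra). unfold Rdiv in Hs. lra. }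
    apply Rmult_le_reg_r with P; lra. }
  assert (Ed : / (q - 1) = P) by (rewrite Hq1; field; lra).
  replace (INR (S p) ^ S p / (INR (S p) - 1) ^ p) with (q ^ S p / (q - 1)).
  - apply (affine_geometric_cyclic p A q s lam t); auto.
    + rewrite Ed. unfold P. ring.
    + unfold Rdiv. rewrite Ed, EAP. ring.
  - rewrite Hq1, EP, Eq, S_INR. unfold Rdiv. rewrite Rpow_mult_distr, pow_inv. cbn [pow].
    fold P. field. split; [apply pow_nonzero|]; lra.
Qed.

Lemma large_turn_cost_strategy :
  1 / (q ^ p - 1) <= s ->
  let x := fun i : nat => ((1 + s) * Rpower (1 + / s) (INR i / (INR (S p) - 1)) - s) * lam in
  let a := Rpower (1 + / s) (- (1 / (INR (S p) - 1))) in
  is_strategy (S p) x (cyclic_rays (S p)) /\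
  has_competitive_ratio (S p) lam t x (cyclic_rays (S p)) ((a - (3 + 2 * / s)) / (a - 1)).
Proof.
  intros Hs x a.
  assert (Hspos : 0 < s) by (assert (0 < 1 / (q ^ p - 1)) by (apply Rdiv_lt_0_compat; lra); lra).
  set (al := 1 + / s).
  assert (Hal : 1 < al) by (assert (0 < / s) by (apply Rinv_0_lt_compat; lra); unfold al; lra).
  set (b := Rpower al (1 / P)).
  assert (Hb : 1 < b).
  { rewrite <- (Rpower_O al) by lra. apply Rpower_lt; auto. apply Rdiv_lt_0_compat; lra. }
  assert (Epow : forall i, Rpower al (INR i / (INR (S p) - 1)) = b ^ i).
  { intro i. rewrite <- Rpower_pow by lra. unfold b. rewrite Rpower_mult, EP.
    f_equal. field. lra. }
  assert (Ebp : b ^ p = al).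
  { rewrite <- Epow, EP. fold P. replace (P / P) with 1 by (field; lra). apply Rpower_1. lra. }
  assert (Ex : x = affine_geometric 0 (1 + s) b s lam).
  { apply functional_extensionality. intro i. unfold x, affine_geometric. fold al.
    rewrite Epow. ring. }
  assert (Ea : a = / b) by (unfold a; rewrite Rpower_Ropp, EP; reflexivity).
  replace ((a - (3 + 2 * / s)) / (a - 1)) with (1 + 2 * (b ^ S p / (b - 1))).
  - rewrite Ex. apply (affine_geometric_cyclic p 0 b s lam t); auto; try lra.
    unfold Rdiv. rewrite Ebp. unfold al. field. lra.
  - rewrite Ea. cbn [pow]. rewrite Ebp. unfold al. field. repeat split; lra.
Qed.

End ExplicitStrategies.

Theorem theorem6 (m : nat) (t lam : R)
  (hm : (2 <= m)%nat) (ht : 0 <= t) (hlam : 0 < lam) :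
  let s := t / (2 * lam) in
  let q := INR m / (INR m - 1) in
  (s <= 1 / (q ^ (m - 1) - 1) ->
     let x := fun i : nat =>
       (( / (INR m - 1) * (1 - (q ^ (m - 1) - 1) * s) * INR i + (1 + s)) * q ^ i - s) * lam in
     is_strategy m x (cyclic_rays m) /\
     is_optimal m lam t x (cyclic_rays m) /\
     has_competitive_ratio m lam t x (cyclic_rays m)
       (1 + 2 * (INR m ^ m / (INR m - 1) ^ (m - 1)))) /\
  (1 / (q ^ (m - 1) - 1) <= s ->
     let x := fun i : nat =>
       ((1 + s) * Rpower (1 + / s) (INR i / (INR m - 1)) - s) * lam in
     let a := Rpower (1 + / s) (- (1 / (INR m - 1))) in
     is_strategy m x (cyclic_rays m) /\
     has_competitive_ratio m lam t x (cyclic_rays m)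
       ((a - (3 + 2 * / s)) / (a - 1))).
Proof.
  destruct m as [|p]; [lia|]. replace (S p - 1)%nat with p by lia.
  assert (Hp : (1 <= p)%nat) by lia.
  intros s q. split.
  - intros Hs x.
    destruct (small_turn_cost_strategy p t lam Hp ht hlam Hs) as [Hstrat Hratio].
    split; [exact Hstrat|]. split; [|exact Hratio].
    exists (1 + 2 * (INR (S p) ^ S p / (INR (S p) - 1) ^ p)). split; [exact Hratio|].
    intros x' r' C' Hs' [Hub _].
    pose proof (competitive_ratio_ge (S p) lam t C' x' r' Hs' hm ht hlam Hub) as Hge.
    replace (S p - 1)%nat with p in Hge by lia. exact Hge.
  - exact (large_turn_cost_strategy p t lam Hp ht hlam).
Qed.
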